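(* Let $X$ be a Banach space and $x\in S_X$. (1) If $x$ is a preserved extreme point of $B_X$ and $x$ is a $\Delta$-point, then $x$ is a super $\Delta$-point. (2) If $x$ is an extreme point of $B_X$ and $x$ is a super $\Delta$-point, then $x$ is a ccs $\Delta$-point. (3) In particular, every preserved extreme point of $B_X$ which is a $\Delta$-point is both a super $\Delta$-point and a ccs $\Delta$-point.
   Context: $X$ is a real or complex Banach space with closed unit ball $B_X$, unit sphere $S_X$, and canonical embedding $J_X:X\to X^{**}$. A point $x\in B_X$ is a preserved extreme point if $J_X(x)$ is an extreme point of $B_{X^{**}}$. A slice of $B_X$ is a non-empty set $\{y\in B_X:\operatorname{Re}x^*(y)>\|x^*\|-\delta\}$ with $x^*\in X^*$, $\delta>0$; a ccs of $B_X$ is a set $\sum_{i=1}^n\lambda_iS_i$ with $\lambda_i\in(0,1]$, $\sum\lambda_i=1$, $S_i$ slices of $B_X$. For $x\in S_X$: $x$ is a $\Delta$-point if $\sup_{y\in S}\|x-y\|=2$ for every slice $S$ of $B_X$ containing $x$; a super $\Delta$-point if $\sup_{y\in V}\|x-y\|=2$ for every relatively weakly open subset $V$ of $B_X$ containing $x$; a ccs $\Delta$-point if $\sup_{y\in C}\|x-y\|=2$ for every ccs $C$ of $B_X$ containing $x$. *)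

From HB Require Import structures.
From mathcomp Require Import all_boot all_order all_algebra.
From mathcomp Require Import all_classical all_reals all_analysis.
From mathcomp Require Export complex.
Set Implicit Arguments. Unset Strict Implicit. Unset Printing Implicit Defensive.
Import Order.TTheory GRing.Theory Num.Theory.
Local Open Scope classical_set_scope.
Local Open Scope ring_scope.

(* Everything below is parameterised by the scalar field K (R or R[i])
   and by its real-part map [re] (identity in the real case, 'Re in the
   complex case).  Norms and real parts take values in K (they are real). *)
Section BanachNotions.
Variables (K : numFieldType) (re : K -> K) (X : normedModType K).

Definition unit_ball : set X := [set y | `|y| <= 1].
Definition unit_sphere : set X := [set y | `|y| = 1].

Definition is_sup (A : set K) (r : K) : Prop :=
  (forall a, A a -> a <= r) /\ (forall s, (forall a, A a -> a <= s) -> r <= s).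

Definition dual_elt (f : X -> K) : Prop :=
  (forall (a : K) (y z : X), f (a *: y + z) = a * f y + f z) /\
  (exists M : K, forall y, `|f y| <= M * `|y|).

Definition dual_norm (f : X -> K) (r : K) : Prop :=
  is_sup [set `|f y| | y in unit_ball] r.

(* X^** : bounded linear functionals on X^*; they are represented by maps
   (X -> K) -> K of which only the values on X^* matter. *)
Definition bidual_elt (Phi : (X -> K) -> K) : Prop :=
  (forall (a : K) (f g : X -> K), dual_elt f -> dual_elt g ->
     Phi (fun y => a * f y + g y) = a * Phi f + Phi g) /\
  (exists M : K, forall f r, dual_elt f -> dual_norm f r -> `|Phi f| <= M * r).

Definition bidual_ball (Phi : (X -> K) -> K) : Prop :=
  bidual_elt Phi /\
  (forall f r, dual_elt f -> dual_norm f r -> `|Phi f| <= r).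

Definition bidual_eq (Phi Psi : (X -> K) -> K) : Prop :=
  forall f, dual_elt f -> Phi f = Psi f.

Definition canon_emb (x : X) : (X -> K) -> K := fun f => f x.

Definition extreme_point (x : X) : Prop :=
  unit_ball x /\
  forall (y z : X) (l : K), unit_ball y -> unit_ball z -> 0 < l < 1 ->
    x = l *: y + (1 - l) *: z -> y = z.

Definition bidual_extreme_point (Phi : (X -> K) -> K) : Prop :=
  bidual_ball Phi /\
  forall (Psi1 Psi2 : (X -> K) -> K) (l : K),
    bidual_ball Psi1 -> bidual_ball Psi2 -> 0 < l < 1 ->
    bidual_eq Phi (fun f => l * Psi1 f + (1 - l) * Psi2 f) ->
    bidual_eq Psi1 Psi2.

Definition preserved_extreme_point (x : X) : Prop :=
  unit_ball x /\ bidual_extreme_point (canon_emb x).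

Definition slice (S : set X) : Prop :=
  (exists (f : X -> K) (r delta : K),
     [/\ dual_elt f, dual_norm f r, 0 < delta &
         S = [set y | unit_ball y /\ r - delta < re (f y)]]) /\
  S !=set0.

Definition ccs (C : set X) : Prop :=
  exists (n : nat) (l : 'I_n -> K) (S : 'I_n -> set X),
    [/\ forall i, 0 < l i <= 1,
        \sum_(i < n) l i = 1,
        forall i, slice (S i) &
        C = [set z | exists y : 'I_n -> X,
                       (forall i, S i (y i)) /\ z = \sum_(i < n) l i *: y i]].

(* weakly open subsets of X (weak topology sigma(X, X^* ) ), via its
   standard basic neighbourhoods {y | |f_i (y - u)| < eps, i < n} *)
Definition weakly_open (U : set X) : Prop :=
  forall u, U u -> exists (n : nat) (f : 'I_n -> X -> K) (eps : K),
    [/\ forall i, dual_elt (f i), 0 < eps &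
        [set y | forall i, `|f i (y - u)| < eps] `<=` U].

Definition rel_weakly_open_ball (V : set X) : Prop :=
  exists U, weakly_open U /\ V = U `&` unit_ball.

Definition diam2_from (x : X) (A : set X) : Prop :=
  is_sup [set `|x - y| | y in A] 2.

Definition Delta_point (x : X) : Prop :=
  unit_sphere x /\ forall S, slice S -> S x -> diam2_from x S.

Definition super_Delta_point (x : X) : Prop :=
  unit_sphere x /\ forall V, rel_weakly_open_ball V -> V x -> diam2_from x V.

Definition ccs_Delta_point (x : X) : Prop :=
  unit_sphere x /\ forall C, ccs C -> C x -> diam2_from x C.

End BanachNotions.

From HB Require Import structures.
From mathcomp Require Import all_boot all_order all_algebra.
From mathcomp Require Import all_classical all_reals all_analysis.
From mathcomp Require Import complex.
From mathcomp Require Import ring lra.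
Import Order.TTheory GRing.Theory Num.Theory.
Import numFieldNormedType.Exports.
Local Open Scope ring_scope.
Local Open Scope classical_set_scope.
Set Implicit Arguments. Unset Strict Implicit. Unset Printing Implicit Defensive.

(* An extreme point x of B_X is weakly rigid: if x is a convex
   combination of points y_i of B_X, then each y_i agrees with x on X^*
   (extreme_weakly_rigid).  If x lies in a ccs C = sum_i l_i S_i, rigidity
   puts x in every slice S_i, and the intersection V of the open half-spaces
   defining the S_i, cut down to B_X, is a relatively weakly open set with
   x in V and V contained in C; so super Delta at x gives diameter 2 on C
   (ccs_Delta_of_super).

   Suppose x is a preserved extreme point and a Delta-point, and
   a basic weak neighbourhood {y : |f_i(y - x)| < eps, i < n} of x stays at
   distance <= s < 2 from x on B_X.  Slices around x then contain far points,
   hence points of the finitely many caps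
   P_(i,j) = {y in B_X : Re w_j f_i(y) >= Re w_j f_i(x) + eps/2}, w_j rotations.
   A Frank-Wolfe descent (finite_approximation) approximates x on finitely
   many functionals by convex combinations of points of the caps; an
   ultrafilter over these approximations yields J_X x = sum_p lam_p Phi_p
   with Phi_p in B_{X^**} in the weak*-closure of P_p.  Extremality of J_X x
   forces Phi_p = J_X x for some lam_p > 0, which is impossible
   (caps_not_preserved).  Part (3) combines both, since preserved extreme
   points are weakly rigid too. *)

Section DualFunctionals.
Context {K : numFieldType} {X : normedModType K}.
Implicit Types (f g : X -> K) (y z : X).

Lemma dual0 f : dual_elt f -> f 0 = 0.
Proof.
case=> lin _; have := lin 1 0 0; rewrite scale1r addr0 mul1r => h.
by apply/esym/(addrI (f 0)); rewrite addr0 -h.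
Qed.

Lemma dualD f y z : dual_elt f -> f (y + z) = f y + f z.
Proof. by move=> [lin _]; rewrite -[y]scale1r lin mul1r scale1r. Qed.

Lemma dualZ f a y : dual_elt f -> f (a *: y) = a * f y.
Proof. by move=> df; rewrite -[a *: y]addr0 (proj1 df) dual0 // addr0. Qed.

Lemma dualB f y z : dual_elt f -> f (y - z) = f y - f z.
Proof. by move=> df; rewrite -scaleN1r dualD // dualZ // mulN1r. Qed.

Lemma dual_sum f (I : Type) (r : seq I) (l : I -> K) (y : I -> X) :
  dual_elt f -> f (\sum_(i <- r) l i *: y i) = \sum_(i <- r) l i * f (y i).
Proof.
move=> df; elim: r => [|a r IH]; first by rewrite !big_nil dual0.
by rewrite !big_cons dualD // dualZ // IH.
Qed.

Lemma dual_lipschitz f : dual_elt f ->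
  exists M, 0 <= M /\ forall y, `|f y| <= M * `|y|.
Proof.
case=> _ [M HM]; exists `|M|; split => // y; apply: (le_trans (HM y)).
have M0 : 0 <= M * `|y| by apply: le_trans (HM y).
by rewrite -{1}(ger0_norm M0) normrM normr_id.
Qed.

Lemma dual_ball_bound f : dual_elt f ->
  exists M, 0 <= M /\ forall y, unit_ball y -> `|f y| <= M.
Proof.
move=> /dual_lipschitz [M [M0 HM]]; exists M; split => // y yB.
by apply: (le_trans (HM y)); apply: ler_piMr.
Qed.

Lemma dual_norm_ub f r y : dual_norm f r -> unit_ball y -> `|f y| <= r.
Proof. by move=> [ub _] yB; apply: ub; exists y. Qed.

Lemma dual_zero : dual_elt (fun _ : X => (0 : K)).
Proof. by split; [move=> *; rewrite mulr0 addr0 | exists 0 => y; rewrite normr0 mul0r]. Qed.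

Lemma dual_comb m (c : 'I_m -> K) (g : 'I_m -> X -> K) : (forall k, dual_elt (g k)) ->
  dual_elt (fun y => \sum_k c k * g k y).
Proof.
move=> gd; split.
  move=> a y z; rewrite mulr_sumr -big_split /=; apply: eq_bigr => k _.
  by case: (gd k) => [lin _]; rewrite lin; ring.
have /choice [M hM] : forall k, exists M, 0 <= M /\ forall y, `|g k y| <= M * `|y|.
  by move=> k; apply: dual_lipschitz.
exists (\sum_k `|c k| * M k) => y; rewrite mulr_suml.
apply: le_trans (ler_norm_sum _ _ _) _; apply: ler_sum => k _.
by rewrite normrM -mulrA; apply: ler_wpM2l => //; case: (hM k).
Qed.

Lemma dual_scale (c : K) g : dual_elt g -> dual_elt (fun y => c * g y).
Proof.
move=> gd; have := @dual_comb 1 (fun _ => c) (fun _ => g) (fun _ => gd).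
by congr dual_elt; apply: funext => y; rewrite big_ord1.
Qed.

Lemma dual_lin2 (a : K) f g : dual_elt f -> dual_elt g ->
  dual_elt (fun y => a * f y + g y).
Proof.
move=> df dg.
have hd : forall k : 'I_2, dual_elt (if k == ord0 then f else g).
  by move=> k; case: (k == ord0).
have := @dual_comb 2 (fun k => if k == ord0 then a else 1) _ hd.
by congr dual_elt; apply: funext => y; rewrite big_ord_recl big_ord1 /= mul1r.
Qed.

Lemma canon_ball y : unit_ball y -> bidual_ball (canon_emb y).
Proof.
move=> yB; have bd f r : dual_elt f -> dual_norm f r -> `|canon_emb y f| <= r.
  by move=> _ fr; apply: dual_norm_ub fr yB.
by split => //; split => //; exists 1 => f r df fr; rewrite mul1r; apply: bd.
Qed.

End DualFunctionals.

Section Diameter.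
Context {K : numFieldType} {X : normedModType K}.
Local Notation B := (@unit_ball K X).

Lemma ball_dist2 (x y : X) : B x -> B y -> `|x - y| <= 2.
Proof.
rewrite /unit_ball /= => hx hy; apply: (le_trans (ler_normB x y)).
by rewrite -[2]/(1 + 1); apply: lerD.
Qed.

Lemma norm_sum_ball (I : Type) (r : seq I) (P : pred I) (l : I -> K) (y : I -> X) :
  (forall i, 0 <= l i) -> (forall i, B (y i)) ->
  `|\sum_(i <- r | P i) l i *: y i| <= \sum_(i <- r | P i) l i.
Proof.
move=> l0 yB; apply: (le_trans (ler_norm_sum _ _ _)); apply: ler_sum => i _.
by rewrite normrZ ger0_norm //; apply: ler_piMr => //; apply: yB.
Qed.

Lemma diam2_fromP (x : X) (S : set X) : B x -> S `<=` B ->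
  diam2_from x S <->
  (forall s, s \is Num.real -> s < 2 -> exists y, S y /\ s < `|x - y|).
Proof.
move=> xB SB; split => [[_ lub] s sr s2|far].
  apply: contrapT => nex; have : 2 <= s.
    apply: lub => _ [y Sy <-].
    by rewrite real_leNgt //; apply/negP => sy; apply: nex; exists y.
  by move/(lt_le_trans s2); rewrite ltxx.
split; first by move=> _ [y Sy <-]; apply: ball_dist2 => //; apply: SB.
move=> s ub; have [y [Sy _]] := far 0 (real0 _) (ltr0Sn _ 1).
have sr : s \is Num.real.
  have ys : `|x - y| <= s by apply: ub; exists y.
  by rewrite -(ler_real ys) normr_real.
rewrite real_leNgt //; apply/negP => s2; have [z [Sz sz]] := far s sr s2.
have zs : `|x - z| <= s by apply: ub; exists z.
by have := lt_le_trans sz zs; rewrite ltxx.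
Qed.

Lemma diam2_from_sub (x : X) (V C : set X) : B x -> C `<=` B ->
  V `<=` C -> diam2_from x V -> diam2_from x C.
Proof.
move=> xB CB VC dV; apply/diam2_fromP => // s sr s2.
have [y [Vy sy]] := (diam2_fromP xB (subset_trans VC CB)).1 dV s sr s2.
by exists y; split => //; apply: VC.
Qed.

End Diameter.

Section ConvexSplitting.
Context {K : numFieldType}.

Lemma convex_split (I : finType) (l : I -> K) (i0 : I) :
  (forall i, 0 <= l i) -> \sum_i l i = 1 -> 0 < l i0 ->
  (l i0 = 1 /\ forall i, i != i0 -> l i = 0) \/
  [/\ l i0 < 1, forall i, 0 <= l i / (1 - l i0) &
      \sum_(i | i != i0) l i / (1 - l i0) = 1].
Proof.
move=> l0 l1 li0; have hs := l1; rewrite (bigD1 i0) //= in hs.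
have rest0 : 0 <= \sum_(i | i != i0) l i by apply: sumr_ge0.
have L1 : l i0 <= 1 by rewrite -hs lerDl.
case: (eqVneq (l i0) 1) => [L1e|L1n].
  left; split => // i ii0.
  have r0 : \sum_(i | i != i0) l i = 0 by apply/(addrI (l i0)); rewrite hs L1e addr0.
  move/eqP: r0; rewrite psumr_eq0; last by move=> j _; apply: l0.
  by move=> /allP /(_ i (mem_index_enum i)); rewrite ii0 => /eqP.
have L1' : l i0 < 1 by rewrite lt_neqAle L1n L1.
have d0 : 0 < 1 - l i0 by rewrite subr_gt0.
right; split => // [i|]; first by apply: divr_ge0 => //; apply: ltW.
have hr : \sum_(i | i != i0) l i = 1 - l i0 by rewrite -hs addrAC subrr add0r.
by rewrite -mulr_suml hr divff // gt_eqF.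
Qed.

End ConvexSplitting.

Section Rigidity.
Context {K : numFieldType} {X : normedModType K}.
Local Notation B := (@unit_ball K X).

(* This is what both parts of the theorem use of extremality. *)
Definition weakly_rigid (x : X) : Prop :=
  forall (I : finType) (l : I -> K) (y : I -> X),
    (forall i, 0 < l i) -> \sum_i l i = 1 -> (forall i, B (y i)) ->
    x = \sum_i l i *: y i -> forall i f, dual_elt f -> f (y i) = f x.

Lemma extreme_conv_eq (x : X) (I : finType) (l : I -> K) (y : I -> X) :
  extreme_point x -> (forall i, 0 <= l i) -> \sum_i l i = 1 ->
  (forall i, B (y i)) -> x = \sum_i l i *: y i ->
  forall i0, 0 < l i0 -> y i0 = x.
Proof.
move=> [_ ext] l0 l1 yB xe i0 li0; rewrite (bigD1 i0) //= in xe.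
case: (convex_split l0 l1 li0) => [[L1 rest0]|[L1 c0 c1]].
  rewrite xe L1 scale1r big1 ?addr0 // => i /rest0 ->; exact: scale0r.
have d0 : 0 < 1 - l i0 by rewrite subr_gt0.
pose z := \sum_(i | i != i0) (l i / (1 - l i0)) *: y i.
have zB : B z by rewrite /B /unit_ball /= -c1; apply: norm_sum_ball.
have xz : x = l i0 *: y i0 + (1 - l i0) *: z.
  rewrite xe scaler_sumr; congr (_ + _); apply: eq_bigr => i _.
  by rewrite scalerA mulrC divfK // gt_eqF.
have yz := ext (y i0) z (l i0) (yB i0) zB (introT andP (conj li0 L1)) xz.
by rewrite xz -yz -scalerDl addrC subrK scale1r.
Qed.

Lemma bidual_extreme_conv_eq (x : X) (I : finType) (l : I -> K)
    (Phi : I -> (X -> K) -> K) :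
  bidual_extreme_point (canon_emb x) -> (forall i, bidual_ball (Phi i)) ->
  (forall i, 0 <= l i) -> \sum_i l i = 1 ->
  (forall f, dual_elt f -> f x = \sum_i l i * Phi i f) ->
  forall i0, 0 < l i0 -> forall f, dual_elt f -> Phi i0 f = f x.
Proof.
move=> [_ ext] Pb l0 l1 xe i0 li0.
case: (convex_split l0 l1 li0) => [[L1 rest0]|[L1 c0 c1]] f df.
  rewrite xe // (bigD1 i0) //= L1 mul1r big1 ?addr0 // => i /rest0 ->.
  exact: mul0r.
have d0 : 0 < 1 - l i0 by rewrite subr_gt0.
pose Psi g := \sum_(i | i != i0) (l i / (1 - l i0)) * Phi i g.
have Psi_le g r : dual_elt g -> dual_norm g r -> `|Psi g| <= r.
  move=> dg gr; apply: (le_trans (ler_norm_sum _ _ _)).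
  apply: (@le_trans _ _ (\sum_(i | i != i0) (l i / (1 - l i0)) * r)).
    apply: ler_sum => i _.
    by rewrite normrM ger0_norm //; apply: ler_wpM2l => //; case: (Pb i) => _; apply.
  by rewrite -mulr_suml c1 mul1r.
have Psib : bidual_ball Psi.
  split => //; split; last by exists 1 => g r dg gr; rewrite mul1r; apply: Psi_le.
  move=> a g h dg dh; rewrite /Psi mulr_sumr -big_split /=; apply: eq_bigr => i _.
  by case: (Pb i) => [[lin _] _]; rewrite lin //; ring.
have splitx g : dual_elt g -> g x = l i0 * Phi i0 g + (1 - l i0) * Psi g.
  move=> dg; rewrite xe // (bigD1 i0) //=; congr (_ + _).
  rewrite /Psi mulr_sumr; apply: eq_bigr => i _.
  by rewrite mulrA mulrCA divff ?gt_eqF // mulr1.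
have := ext (Phi i0) Psi (l i0) (Pb i0) Psib (introT andP (conj li0 L1)) splitx.
by move=> pe; rewrite splitx // -(pe f df) -mulrDl addrC subrK mul1r.
Qed.

Lemma extreme_weakly_rigid (x : X) : extreme_point x -> weakly_rigid x.
Proof.
move=> ex I l y l0 l1 yB xe i f _.
by rewrite (extreme_conv_eq ex (fun i => ltW (l0 i)) l1 yB xe (l0 i)).
Qed.

Lemma preserved_weakly_rigid (x : X) : preserved_extreme_point x -> weakly_rigid x.
Proof.
move=> [_ pe] I l y l0 l1 yB xe i f df.
apply: (bidual_extreme_conv_eq pe (fun i => canon_ball (yB i))
          (fun i => ltW (l0 i)) l1 _ (l0 i) df).
by move=> g dg; rewrite xe dual_sum.
Qed.

End Rigidity.

Lemma directed_ultrafilter (I J : Type) (Bs : J -> set I) : (exists j : J, True) ->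
  (forall j1 j2, exists j3, Bs j3 `<=` Bs j1 `&` Bs j2) -> (forall j, Bs j !=set0) ->
  exists U : set_system I, UltraFilter U /\ forall j, U (Bs j).
Proof.
move=> jex dir ne.
have FF : Filter (filter_from setT Bs) by apply: filter_fromT_filter.
have PF : ProperFilter (filter_from setT Bs) by apply: filter_from_proper => j _; apply: ne.
have [U [UU sFU]] := ultraFilterLemma PF.
by exists U; split => // j; apply: sFU; exists j.
Qed.

Section UltraLimits.
Context {K : numFieldType} {I : Type} (U : set_system I) {UF : UltraFilter U}.
Implicit Types (a : I -> K) (l : K).

Lemma ulim_unique a (l1 l2 : K) : a @ U --> l1 -> a @ U --> l2 -> l1 = l2.
Proof. by move=> h1 h2; apply: cvg_unique h1 h2. Qed.

Lemma ulim_norm_le a l (r : K) :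
  a @ U --> l -> (\forall i \near U, `|a i| <= r) -> `|l| <= r.
Proof.
move=> al ar; have [i0 /= ri0] := filter_ex ar.
have rr : r \is Num.real by rewrite -(ler_real ri0) normr_real.
rewrite real_leNgt //; apply/negP => lr.
have [i [/= h1 h2]] := filter_ex (filterI ar (cvgr_norm_gt _ al _ lr)).
by have := lt_le_trans h2 h1; rewrite ltxx.
Qed.

Lemma ulim_ge0 a l : a @ U --> l -> (forall i, 0 <= a i) -> 0 <= l.
Proof.
move=> al a0; have nal : (fun i => `|a i|) @ U --> `|l| by apply: cvg_norm.
have norm_a : (fun i => `|a i|) = a by apply: funext => i; rewrite ger0_norm.
by rewrite norm_a in nal; rewrite (ulim_unique al nal).
Qed.

Lemma ulim_gt0_near a l : a @ U --> l -> (forall i, 0 <= a i) -> 0 < l ->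
  \forall i \near U, 0 < a i.
Proof.
move=> al a0 l0; have nl0 : 0 < `|l| by rewrite normr_gt0 gt_eqF.
by apply: filterS (cvgr_norm_gt _ al _ nl0) => i /=; rewrite ger0_norm.
Qed.

Lemma ulim_sum (J : Type) (r : seq J) (a : J -> I -> K) (l : J -> K) :
  (forall j, a j @ U --> l j) ->
  (fun i => \sum_(j <- r) a j i) @ U --> \sum_(j <- r) l j.
Proof. by move=> al; apply: cvg_big => [|j _]; [exact: add_continuous | exact: al]. Qed.

End UltraLimits.

Lemma descent_arith (K : numFieldType) (N S D Q t eta : K) : 0 < Q ->
  t = eta ^+ 2 / (2 * Q) -> eta ^+ 2 / 2 <= S -> D <= Q -> 0 <= t ->
  N - 2 * t * S + t ^+ 2 * D <= N - t * eta ^+ 2 / 2.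
Proof.
move=> Q0 te hS hD t0.
apply: (@le_trans _ _ (N - 2 * t * (eta ^+ 2 / 2) + t ^+ 2 * Q)).
  apply: lerD; last by apply: ler_wpM2l => //; apply: exprn_ge0.
  by rewrite lerD2l lerN2; apply: ler_wpM2l => //; apply: mulr_ge0.
have -> : t ^+ 2 * Q = t * eta ^+ 2 / 2 by rewrite te; field; rewrite gt_eqF.
by rewrite le_eqVlt; apply/orP; left; apply/eqP; field.
Qed.
Section RealPart.
Variables (K : numFieldType) (re : K -> K).
Hypothesis re_add : forall a b, re (a + b) = re a + re b.
Hypothesis re_le : forall a, re a <= `|a|.

(* re is additive and 1-Lipschitz, hence real valued. *)
Lemma re0 : re 0 = 0.
Proof. by apply/esym/(addrI (re 0)); rewrite -re_add !addr0. Qed.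

Lemma reN a : re (- a) = - re a.
Proof. by apply/(addrI (re a)); rewrite -re_add !subrr re0. Qed.

Lemma reB a b : re (a - b) = re a - re b.
Proof. by rewrite re_add reN. Qed.

Lemma re_real a : re a \is Num.real.
Proof. by rewrite (ler_real (re_le a)) normr_real. Qed.

Lemma re_ge a : - `|a| <= re a.
Proof. by rewrite lerNl -reN -normrN re_le. Qed.

Lemma re_sum (J : Type) (r : seq J) (F : J -> K) :
  re (\sum_(j <- r) F j) = \sum_(j <- r) re (F j).
Proof. by elim: r => [|j r IH]; rewrite ?big_nil ?re0 // !big_cons re_add IH. Qed.

Lemma pos_lower_bound n (a : 'I_n -> K) : (forall i, 0 < a i) ->
  exists e, 0 < e /\ forall i, e <= a i.
Proof.
elim: n a => [|n IH] a ap; first by exists 1; split => // -[].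
have [e [e0 he]] := IH (fun i => a (lift ord0 i)) (fun i => ap _).
have ar : a ord0 \is Num.real by apply: gtr0_real.
have er : e \is Num.real by apply: gtr0_real.
case/orP: (real_leVge er ar) => hle.
  by exists e; split => // i; case: (unliftP ord0 i) => [j ->|->] //; exact: he.
exists (a ord0); split => // i; case: (unliftP ord0 i) => [j ->|->] //.
exact: le_trans hle (he j).
Qed.

Section OpenHalfspaces.
Context {X : normedModType K}.

Lemma halfspaces_weakly_open n (f : 'I_n -> X -> K) (c : 'I_n -> K) :
  (forall i, dual_elt (f i)) ->
  weakly_open [set z | forall i, c i < re (f i z)].
Proof.
move=> fd u Uu.
have [e [e0 he]] := @pos_lower_bound n (fun i => re (f i u) - c i)
  (fun i => ltac:(by rewrite subr_gt0; apply: Uu)).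
exists n, f, e; split => // z hz i.
have zu := hz i; rewrite dualB // in zu.
have := re_ge (f i z - f i u); rewrite reB => hre.
have : - e < re (f i z) - re (f i u) by apply: lt_le_trans hre; rewrite ltrN2.
by rewrite ltrBrDr; apply: le_lt_trans; rewrite (addrC (- e)) lerBrDr -lerBrDl; apply: he.
Qed.

End OpenHalfspaces.

Section CcsDelta.
Context {X : normedModType K}.
Local Notation B := (@unit_ball K X).

Lemma slice_halfspace (S : set X) : slice re S ->
  exists (f : X -> K) (c : K), dual_elt f /\ S = [set z | B z /\ c < re (f z)].
Proof. by move=> [[f [r [d [df _ _ ->]]]] _]; exists f, (r - d). Qed.

(* If a ccs C = sum_i l_i S_i contains
   x = sum_i l_i y_i, rigidity puts x in every slice S_i, so x lies in the
   relatively weakly open set V = (intersection of the half-spaces) /\ B_X;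
   and V is contained in C (take all y_i equal to a point of V). *)
Lemma ccs_Delta_of_super (x : X) : unit_sphere x -> weakly_rigid x ->
  super_Delta_point x -> ccs_Delta_point re x.
Proof.
move=> xs rig [_ sd]; split => // C [n [l [S [lpos lsum Sl ->]]]] [y [Sy xe]].
have xB : B x by rewrite /B /unit_ball /= xs.
have /choice [fc hfc] : forall i, exists fc : (X -> K) * K,
    dual_elt fc.1 /\ S i = [set z | B z /\ fc.2 < re (fc.1 z)].
  by move=> i; have [f [c fcP]] := slice_halfspace (Sl i); exists (f, c).
have SE i z : S i z <-> B z /\ (fc i).2 < re ((fc i).1 z) by case: (hfc i) => _ ->.
have l0 i : 0 < l i by case/andP: (lpos i).
have yB i : B (y i) by have /SE [] := Sy i.
pose H := [set z | forall i, (fc i).2 < re ((fc i).1 z)].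
have Hx : H x.
  move=> i; have /SE [_ h] := Sy i.
  by rewrite -(rig _ l y l0 lsum yB xe i _ (hfc i).1).
have Hop : weakly_open H := halfspaces_weakly_open (fun i => (hfc i).1).
have dV := sd (H `&` B) (ex_intro _ H (conj Hop erefl)) (conj Hx xB).
apply: diam2_from_sub dV => //.
  move=> _ [z [hz ->]]; rewrite /B /unit_ball /= -lsum.
  by apply: norm_sum_ball => i; [exact: ltW | have /SE [] := hz i].
move=> z [Hz zB]; exists (fun _ => z); split; first by move=> i; apply/SE.
by rewrite -scaler_suml lsum scale1r.
Qed.

End CcsDelta.

Section PreservedDelta.
(* Scalar-field facts needed for part (1): a conjugation cj for which
   Re(cj a * b) is the real inner product, four rotations w_j such that some
   rotation of any scalar has large real part, completeness of the positive
   reals, the Archimedean property, and compactness of bounded sets of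
   scalars (limits along ultrafilters). *)
Variables (cj : K -> K) (w : 'I_4 -> K).
Hypothesis re_realM : forall t a, t \is Num.real -> re (t * a) = t * re a.
Hypothesis re_cj : forall a, re (cj a * a) = `|a| ^+ 2.
Hypothesis norm_expand : forall a b t, t \is Num.real ->
  `|a - t * b| ^+ 2 = `|a| ^+ 2 - 2 * t * re (cj a * b) + t ^+ 2 * `|b| ^+ 2.
Hypothesis rotation : forall z, exists j, `|z| <= 2 * re (w j * z).
Hypothesis sup_ex : forall A : set K, (exists a, A a) -> (forall a, A a -> 0 <= a) ->
  (exists M, forall a, A a -> a <= M) -> exists r, is_sup A r.
Hypothesis archimedean : forall a : K, a \is Num.real -> exists m : nat, a < m%:R.
Hypothesis bounded_ulim : forall (I : Type) (U : set_system I), UltraFilter U ->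
  forall (a : I -> K) (M : K), (forall i, `|a i| <= M) -> exists l : K, a @ U --> l.

Context {X : normedModType K}.
Local Notation B := (@unit_ball K X).

(* re is 1-Lipschitz, so lower bounds on Re pass to ultralimits. *)
Lemma ulim_re_ge (I : Type) (U : set_system I) {UF : UltraFilter U} (a : I -> K) (l c : K) :
  a @ U --> l -> (\forall i \near U, c <= re (a i)) -> c <= re l.
Proof.
move=> al ca; have [i0 /= ci0] := filter_ex ca.
have cr : c \is Num.real by rewrite (ler_real ci0) re_real.
rewrite real_leNgt ?re_real //; apply/negP => lc.
have d0 : 0 < c - re l by rewrite subr_gt0.
have [i [/= i1 i2]] := filter_ex (filterI ca ((cvgrPdist_lt _ _).1 al _ d0)).
have := re_le (a i - l); rewrite reB distrC => /le_lt_trans /(_ i2).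
by rewrite ltrD2r => /(le_lt_trans i1); rewrite ltxx.
Qed.

Section Caps.
Variables (x : X) (n : nat) (f : 'I_n -> X -> K) (eps : K).
Hypotheses (fd : forall i, dual_elt (f i)) (eps0 : 0 < eps).

Definition cap_index := ('I_n * 'I_4)%type.

Definition cap_fun (p : cap_index) : X -> K := fun y => w p.2 * f p.1 y.

Definition in_cap (p : cap_index) (y : X) : Prop :=
  B y /\ re (cap_fun p x) + eps / 2 <= re (cap_fun p y).

Definition cap_config (lam : cap_index -> K) (ys : cap_index -> X) : Prop :=
  [/\ forall p, 0 <= lam p, \sum_p lam p = 1, forall p, B (ys p) &
      forall p, lam p = 0 \/ in_cap p (ys p)].

Definition config_value (g : X -> K) (lam : cap_index -> K) (ys : cap_index -> X) : K :=
  \sum_p lam p * g (ys p).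

Definition dirac_weights (p0 : cap_index) : cap_index -> K :=
  fun p => if p == p0 then 1 else 0.

Lemma cap_fun_dual p : dual_elt (cap_fun p).
Proof. exact: dual_scale. Qed.

Lemma config_weight_le1 lam ys p : cap_config lam ys -> `|lam p| <= 1.
Proof.
move=> [l0 l1 _ _]; rewrite ger0_norm // -l1 (bigD1 p) //= lerDl.
exact: sumr_ge0.
Qed.

Lemma config_value_bound g M lam ys : (forall y, B y -> `|g y| <= M) ->
  cap_config lam ys -> `|config_value g lam ys| <= M.
Proof.
move=> gM [l0 l1 yB _]; apply: le_trans (ler_norm_sum _ _ _) _.
apply: (@le_trans _ _ (\sum_p lam p * M)); last by rewrite -mulr_suml l1 mul1r.
by apply: ler_sum => p _; rewrite normrM ger0_norm //; apply: ler_wpM2l => //; apply: gM.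
Qed.

Lemma dirac_config p y : in_cap p y -> cap_config (dirac_weights p) (fun _ => y).
Proof.
move=> Py; rewrite /dirac_weights; split.
- by move=> q; case: (q == p).
- by rewrite (bigD1 p) //= eqxx big1 ?addr0 // => q /negbTE ->.
- by move=> _; case: Py.
- by move=> q; case: eqP => [-> | _]; [right | left].
Qed.

Lemma dirac_value g p y : config_value g (dirac_weights p) (fun _ => y) = g y.
Proof.
rewrite /config_value /dirac_weights (bigD1 p) //= eqxx mul1r big1 ?addr0 //.
by move=> q /negbTE ->; rewrite mul0r.
Qed.

Lemma cap_merge p a b y y' : 0 <= a -> 0 <= b ->
  (a = 0 \/ in_cap p y) -> (b = 0 \/ in_cap p y') -> B y -> B y' ->
  exists z, [/\ B z, (a + b = 0 \/ in_cap p z) &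
    forall g, dual_elt g -> (a + b) * g z = a * g y + b * g y'].
Proof.
move=> a0 b0 ha hb yB y'B.
case: (eqVneq a 0) => [-> | an].
  by exists y'; split => //; [rewrite add0r | move=> g _; rewrite add0r mul0r add0r].
case: (eqVneq b 0) => [-> | bn].
  by exists y; split => //; [rewrite addr0 | move=> g _; rewrite addr0 mul0r addr0].
have [_ Py] : in_cap p y by case: ha => // /eqP; rewrite (negbTE an).
have [_ Py'] : in_cap p y' by case: hb => // /eqP; rewrite (negbTE bn).
have s0 : 0 < a + b by apply: addr_gt0; rewrite lt_def ?an ?bn.
have c1 : 0 <= a / (a + b) by apply: divr_ge0 => //; apply: ltW.
have c2 : 0 <= b / (a + b) by apply: divr_ge0 => //; apply: ltW.
have c12 : a / (a + b) + b / (a + b) = 1 by rewrite -mulrDl divff // gt_eqF.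
pose z := a / (a + b) *: y + b / (a + b) *: y'.
have zB : B z.
  rewrite /unit_ball /=; apply: le_trans (ler_normD _ _) _.
  rewrite (normrZ (a / (a + b))) (normrZ (b / (a + b))) (ger0_norm c1) (ger0_norm c2) -c12.
  by apply: lerD; apply: ler_piMr.
exists z; split => //.
- right; split => //.
  have dfp := fd p.1; rewrite /cap_fun /z (dualD _ _ dfp) !(dualZ _ _ dfp) mulrDr re_add.
  rewrite (mulrCA (w p.2) (a / (a + b))) (mulrCA (w p.2) (b / (a + b))).
  rewrite (re_realM _ (ger0_real c1)) (re_realM _ (ger0_real c2)).
  apply: le_trans (lerD (ler_wpM2l c1 Py) (ler_wpM2l c2 Py')).
  by rewrite -mulrDl c12 mul1r.
- by move=> g dg; rewrite /z (dualD _ _ dg) !(dualZ _ _ dg); field; rewrite gt_eqF.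
Qed.

Lemma config_mix lam ys p1 y1 t : cap_config lam ys -> in_cap p1 y1 -> 0 <= t <= 1 ->
  exists lam2 ys2, cap_config lam2 ys2 /\ forall g, dual_elt g ->
    config_value g lam2 ys2 = (1 - t) * config_value g lam ys + t * g y1.
Proof.
move=> [l0 l1 yB lP] P1 /andP [t0 t1]; have t1' : 0 <= 1 - t by rewrite subr_ge0.
have [d0 d1 _ dP] := dirac_config P1.
pose lam2 p := (1 - t) * lam p + t * dirac_weights p1 p.
have /choice [zs hz] : forall p, exists z, [/\ B z, (lam2 p = 0 \/ in_cap p z) &
    forall g, dual_elt g ->
      lam2 p * g z = (1 - t) * lam p * g (ys p) + t * dirac_weights p1 p * g y1].
  move=> p; apply: cap_merge; try exact: mulr_ge0.
  - by case: (lP p) => [->|]; [left; rewrite mulr0 | right].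
  - by case: (dP p) => [->|]; [left; rewrite mulr0 | right].
  - exact: yB.
  - by case: P1.
exists lam2, zs; split.
  split => [p||p|p]; try by case: (hz p).
  - by apply: addr_ge0; apply: mulr_ge0.
  - by rewrite big_split /= -!mulr_sumr l1 d1 !mulr1 subrK.
move=> g dg; rewrite -(dirac_value g p1 y1) /config_value !mulr_sumr -big_split /=.
by apply: eq_bigr => p _; case: (hz p) => _ _ ->; rewrite // !mulrA.
Qed.

(* The caps norm x in the weak* sense: for every h in X^* and tau > 0 some
   point of some cap has Re h larger than Re h(x) - tau.  (Obtained below
   from the Delta-point property.) *)
Hypothesis caps_norming : forall h, dual_elt h -> forall tau, 0 < tau ->
  exists p y, in_cap p y /\ re (h x) - tau < re (h y).

Section Descent.
(* Finitely many functionals g_k, bounded by Mg k on B_X, such that every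
   configuration stays at distance at least eta from x on some g_k; this is
   shown to be absurd by a Frank-Wolfe descent on the squared distance. *)
Variables (m : nat) (g : 'I_m -> X -> K) (Mg : 'I_m -> K) (eta : K).
Hypotheses (gd : forall k, dual_elt (g k)) (eta0 : 0 < eta).
Hypothesis g_bound : forall k y, B y -> `|g k y| <= Mg k.
Hypothesis far : forall lam ys, cap_config lam ys ->
  exists k, eta <= `|g k x - config_value (g k) lam ys|.

Definition defect lam ys : K := \sum_k `|g k x - config_value (g k) lam ys| ^+ 2.

Let Q : K := \sum_k (2 * Mg k) ^+ 2 + eta ^+ 2.
Let step : K := eta ^+ 2 / (2 * Q).

Lemma Mg_ge0 k : 0 <= Mg k.
Proof.
have := g_bound k (y := 0); rewrite (dual0 (gd k)) normr0; apply.
by rewrite /unit_ball /= normr0.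
Qed.

Lemma bounds_sqr_ge0 : 0 <= \sum_k (2 * Mg k) ^+ 2.
Proof. by apply: sumr_ge0 => k _; apply: exprn_ge0; apply: mulr_ge0 (Mg_ge0 k). Qed.

Lemma Q_gt0 : 0 < Q.
Proof. by apply: ltr_wpDl bounds_sqr_ge0 _; apply: exprn_gt0. Qed.

Lemma step_ge0 : 0 <= step.
Proof.
by apply: divr_ge0; [apply: exprn_ge0; apply: ltW | apply: mulr_ge0 => //; apply: ltW Q_gt0].
Qed.

Lemma step_le1 : step <= 1.
Proof.
rewrite /step ler_pdivrMr ?mulr_gt0 ?Q_gt0 // mul1r /Q mulrDr.
apply: ler_wpDl; first exact: mulr_ge0 bounds_sqr_ge0.
by rewrite mulr2n mulrDl mul1r lerDr exprn_ge0 // ltW.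
Qed.

Lemma defect_far lam ys : cap_config lam ys -> eta ^+ 2 <= defect lam ys.
Proof.
move=> v; have [k hk] := far v.
rewrite /defect (bigD1 k) //= -[eta ^+ 2]addr0; apply: lerD.
  by rewrite !expr2; apply: ler_pM => //; apply: ltW.
by apply: sumr_ge0 => j _; apply: exprn_ge0.
Qed.

(* One descent step: moving by the fraction step towards a point of a cap
   almost maximizing the gradient functional decreases the defect by a
   fixed amount. *)
Lemma descent_step lam ys : cap_config lam ys ->
  exists lam2 ys2, cap_config lam2 ys2 /\
    defect lam2 ys2 <= defect lam ys - step * eta ^+ 2 / 2.
Proof.
move=> v; pose u k := g k x - config_value (g k) lam ys.
pose h y := \sum_k cj (u k) * g k y.
have hd : dual_elt h := dual_comb (fun k => cj (u k)) gd.
have tau0 : 0 < eta ^+ 2 / 2 by apply: divr_gt0 => //; apply: exprn_gt0.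
have [p1 [y1 [P1 hy1]]] := caps_norming hd tau0.
have step01 : 0 <= step <= 1 by rewrite step_ge0 step_le1.
have [lam2 [ys2 [v2 val2]]] := config_mix v P1 step01.
exists lam2, ys2; split => //.
pose d k := g k y1 - config_value (g k) lam ys.
have stepr : step \is Num.real by apply: ger0_real; apply: step_ge0.
have -> : defect lam2 ys2 = defect lam ys - 2 * step * (\sum_k re (cj (u k) * d k)) +
    step ^+ 2 * (\sum_k `|d k| ^+ 2).
  have e2k k : g k x - config_value (g k) lam2 ys2 = u k - step * d k.
    by rewrite val2 // /u /d; ring.
  rewrite /defect; under eq_bigr => k _ do rewrite e2k norm_expand //.
  by rewrite !big_split /= sumrN -!mulr_sumr.
apply: descent_arith Q_gt0 (erefl step) _ _ step_ge0.
  have -> : \sum_k re (cj (u k) * d k) = (re (h y1) - re (h x)) + defect lam ys.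
    rewrite /h !re_sum -sumrB -big_split /=; apply: eq_bigr => k _.
    have -> : cj (u k) * d k = cj (u k) * g k y1 - cj (u k) * g k x + cj (u k) * u k.
      by rewrite /d /u; ring.
    by rewrite re_add reB re_cj.
  have hN := defect_far v.
  have h3 : - (eta ^+ 2 / 2) < re (h y1) - re (h x) by rewrite ltrBrDl.
  apply: le_trans (lerD (ltW h3) hN).
  by rewrite le_eqVlt; apply/orP; left; apply/eqP; field.
apply: (@le_trans _ _ (\sum_k (2 * Mg k) ^+ 2)); last by rewrite lerDl exprn_ge0 // ltW.
apply: ler_sum => k _.
have dk : `|d k| <= 2 * Mg k.
  apply: le_trans (ler_normB _ _) _; rewrite mulr2n mulrDl mul1r.
  by apply: lerD; [apply: g_bound; case: P1 | apply: config_value_bound (g_bound k) v].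
by rewrite !expr2; apply: ler_pM.
Qed.

(* Iterating the descent step drives the nonnegative defect below zero. *)
Lemma descent_absurd : False.
Proof.
have [p0 [y0 [P0 _]]] := caps_norming (@dual_zero K X) ltr01.
pose N0 := defect (dirac_weights p0) (fun _ => y0).
pose kap := step * eta ^+ 2 / 2.
have kap0 : 0 < kap.
  apply: divr_gt0 => //; apply: mulr_gt0; last exact: exprn_gt0.
  by apply: divr_gt0; [exact: exprn_gt0 | apply: mulr_gt0 => //; exact: Q_gt0].
have iter j : exists lam ys, cap_config lam ys /\ defect lam ys <= N0 - j%:R * kap.
  elim: j => [|j [lam [ys [v hN]]]].
    exists (dirac_weights p0), (fun _ => y0).
    by rewrite mul0r subr0; split => //; apply: dirac_config.
  have [lam2 [ys2 [v2 hN2]]] := descent_step v.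
  exists lam2, ys2; split => //; apply: le_trans hN2 _.
  by rewrite -[j.+1%:R]natr1 mulrDl mul1r opprD addrA lerD2r.
have N0r : N0 / kap \is Num.real.
  apply: ger0_real; apply: divr_ge0; last exact: ltW.
  by apply: sumr_ge0 => k _; apply: exprn_ge0.
have [j hj] := archimedean N0r.
have [lam [ys [_ hN]]] := iter j.
have := le_trans (sumr_ge0 _ (fun k _ => exprn_ge0 2 (normr_ge0 _))) hN.
rewrite subr_ge0 -ler_pdivlMr // => /le_lt_trans /(_ hj).
by rewrite ltxx.
Qed.

End Descent.

Lemma finite_approximation m (g : 'I_m -> X -> K) : (forall k, dual_elt (g k)) ->
  forall eta, 0 < eta -> exists lam ys, cap_config lam ys /\
    forall k, `|g k x - config_value (g k) lam ys| < eta.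
Proof.
move=> gd eta eta0; apply: contrapT => nH.
have /choice [Mg hMg] : forall k, exists M, forall y, B y -> `|g k y| <= M.
  by move=> k; have [M [_ hM]] := dual_ball_bound (gd k); exists M.
apply: (descent_absurd gd eta0 hMg) => lam ys v; apply: contrapT => nk.
apply: nH; exists lam, ys; split => // k.
rewrite real_ltNge ?normr_real ?gtr0_real //; apply/negP => h; apply: nk; exists k; exact: h.
Qed.

(* Index set for the approximating net: a finite list of functionals and a
   precision 1/(k+1); (G, k) precedes (G', k') when every entry of G occurs
   in G' and k <= k'. *)
Definition approx_index := (seq (X -> K) * nat)%type.

Definition listed_in (G0 G : seq (X -> K)) : Prop :=
  forall k, (k < size G0)%N -> exists k', (k' < size G)%N /\ nth 0 G k' = nth 0 G0 k.

Definition approx_tail (j : approx_index) : set approx_index :=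
  [set i | listed_in j.1 i.1 /\ (j.2 <= i.2)%N].

Lemma approx_tail_directed j1 j2 : exists j3,
  approx_tail j3 `<=` approx_tail j1 `&` approx_tail j2.
Proof.
exists (j1.1 ++ j2.1, maxn j1.2 j2.2) => i [hi hk] /=; split; split.
- move=> k hk1.
  have hk2 : (k < size (j1.1 ++ j2.1))%N by rewrite size_cat ltn_addr.
  have [k' [hk' e]] := hi k hk2.
  by exists k'; split => //; rewrite e nth_cat hk1.
- exact: leq_trans (leq_maxl _ _) hk.
- move=> k hk1.
  have hk2 : (size j1.1 + k < size (j1.1 ++ j2.1))%N by rewrite size_cat ltn_add2l.
  have [k' [hk' e]] := hi _ hk2.
  by exists k'; split => //; rewrite e nth_cat ltnNge leq_addr /= addKn.
- exact: leq_trans (leq_maxr _ _) hk.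
Qed.

Lemma approximating_ultranet : exists (U : set_system approx_index)
    (cfg : approx_index -> (cap_index -> K) * (cap_index -> X)),
  [/\ UltraFilter U, forall i, cap_config (cfg i).1 (cfg i).2 &
      forall g, dual_elt g -> config_value g (cfg i).1 (cfg i).2 @[i --> U] --> g x].
Proof.
(* entries of a list which are not in X^* are replaced by 0 *)
pose dual_part (g : X -> K) := if `[< dual_elt g >] then g else (fun _ : X => 0 : K).
have dual_partP g : dual_elt (dual_part g).
  by rewrite /dual_part; case: (asboolP (dual_elt g)) => // _; apply: dual_zero.
have dual_partE g : dual_elt g -> dual_part g = g.
  by move=> dg; rewrite /dual_part; case: (asboolP (dual_elt g)).
have /choice [cfg hcfg] : forall i : approx_index, exists c, cap_config c.1 c.2 /\
    forall k : 'I_(size i.1), `|dual_part (nth 0 i.1 k) x -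
      config_value (dual_part (nth 0 i.1 k)) c.1 c.2| < 1 / (i.2.+1)%:R.
  move=> i; have [lam [ys [v h]]] := finite_approximation
    (g := fun k : 'I_(size i.1) => dual_part (nth 0 i.1 k)) (fun k => dual_partP _)
    (divr_gt0 ltr01 (ltr0Sn _ i.2)).
  by exists (lam, ys).
have tail_ne j : approx_tail j !=set0 by exists j; split => // k hk; exists k.
have [U [UF tailU]] := directed_ultrafilter (ex_intro _ ([::], 0%N) I)
  approx_tail_directed tail_ne.
exists U, cfg; split => // [i|g dg]; first by case: (hcfg i).
apply/cvgrPdist_lt => e e0.
have [k0 hk0] : exists k0 : nat, e^-1 < k0%:R.
  by apply: archimedean; rewrite gtr0_real // invr_gt0.
apply: filterS (tailU ([:: g], k0)) => i [hin hk].
have [k' [hk' ek]] := hin 0%N (ltn0Sn _).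
have := (hcfg i).2 (Ordinal hk'); rewrite /= ek /= dual_partE // => h.
apply: lt_le_trans h _; rewrite div1r -[e]invrK lef_pV2 ?posrE ?invr_gt0 ?ltr0Sn //.
by apply: ltW; apply: lt_le_trans hk0 _; rewrite ler_nat; apply: leqW.
Qed.

Section UltraFunctionals.
Context (I : Type) (U : set_system I) {UF : UltraFilter U}.

Definition ulim_functional (ys : I -> X) (g : X -> K) : K := lim (g (ys i) @[i --> U]).

Lemma ulim_functionalE ys g : (forall i, B (ys i)) -> dual_elt g ->
  g (ys i) @[i --> U] --> ulim_functional ys g.
Proof.
move=> yB dg; have [M [_ hM]] := dual_ball_bound dg.
have [l hl] := bounded_ulim UF (fun i => hM _ (yB i)).
by rewrite /ulim_functional (cvg_lim _ hl).
Qed.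

Lemma ulim_functional_ball ys : (forall i, B (ys i)) -> bidual_ball (ulim_functional ys).
Proof.
move=> yB; have bd g r : dual_elt g -> dual_norm g r -> `|ulim_functional ys g| <= r.
  move=> dg gr; apply: ulim_norm_le (ulim_functionalE yB dg) _.
  by apply: filterS filterT => i _ /=; apply: dual_norm_ub gr (yB i).
split => //; split; last by exists 1 => g r dg gr; rewrite mul1r; apply: bd.
move=> a g h dg dh; apply: (ulim_unique (ulim_functionalE yB (dual_lin2 a dg dh))).
apply: cvgD; last exact: ulim_functionalE.
by apply: cvgM; [exact: cvg_cst | exact: ulim_functionalE].
Qed.

End UltraFunctionals.

Lemma bidual_cap_representation : exists (lamL : cap_index -> K)
    (Phi : cap_index -> (X -> K) -> K),
  [/\ forall p, bidual_ball (Phi p), forall p, 0 <= lamL p, \sum_p lamL p = 1,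
      forall g, dual_elt g -> g x = \sum_p lamL p * Phi p g &
      forall p, 0 < lamL p -> re (cap_fun p x) + eps / 2 <= re (Phi p (cap_fun p))].
Proof.
have [U [cfg [UF cfgP cfg_cvg]]] := approximating_ultranet.
have yB p i : B ((cfg i).2 p) by case: (cfgP i).
have lam_cvg p : exists l : K, (cfg i).1 p @[i --> U] --> l.
  exact: (bounded_ulim UF (fun i => config_weight_le1 p (cfgP i))).
have /choice [lamL lamLE] := lam_cvg.
pose Phi p := ulim_functional U (fun i => (cfg i).2 p).
have PhiE p g : dual_elt g -> g ((cfg i).2 p) @[i --> U] --> Phi p g.
  exact: ulim_functionalE.
have lam0 p : 0 <= lamL p by apply: ulim_ge0 (lamLE p) _ => i; case: (cfgP i).
exists lamL, Phi; split => //.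
- by move=> p; apply: ulim_functional_ball.
- apply: (ulim_unique (ulim_sum (r := index_enum _) (a := fun p i => (cfg i).1 p) lamLE)).
  have -> : (fun i => \sum_(p <- index_enum _) (cfg i).1 p) = (fun _ => 1).
    by apply: funext => i; case: (cfgP i).
  exact: cvg_cst.
- move=> g dg; apply: (ulim_unique (cfg_cvg g dg)); apply: ulim_sum => p.
  by apply: cvgM; [exact: lamLE | exact: PhiE].
- move=> p lp; apply: ulim_re_ge (PhiE p _ (cap_fun_dual p)) _.
  apply: filterS (ulim_gt0_near (lamLE p) (fun i => _) lp) => [i /= li|i].
    by case: (cfgP i) => _ _ _ /(_ p) [e|[]//]; move: li; rewrite e ltxx.
  by case: (cfgP i).
Qed.

(* The caps stay away from x, so J_X x, being a convex combination of their
   weak*-limits, cannot be an extreme point of B_{X^**}. *)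
Lemma caps_not_preserved : ~ bidual_extreme_point (canon_emb x).
Proof.
move=> pe; have [lamL [Phi [Phib l0 l1 xE capP]]] := bidual_cap_representation.
have [p0 lp0] : exists p, 0 < lamL p.
  apply: contrapT => nx; move: l1; rewrite big1 => [/eqP|p _].
    by rewrite eq_sym oner_eq0.
  apply/eqP; rewrite eq_le l0 andbT real_leNgt ?ger0_real //.
  by apply/negP => lp; apply: nx; exists p.
have := capP p0 lp0.
rewrite (bidual_extreme_conv_eq pe Phib l0 l1 xE lp0 (cap_fun_dual p0)) gerDl.
by move=> /(lt_le_trans (divr_gt0 eps0 (ltr0Sn K 1))); rewrite ltxx.
Qed.

End Caps.

(* If some relatively weakly open V around x stayed within
   s < 2 of x, the Delta-point property would give, in every slice around x,
   points outside the basic neighbourhood inside V, i.e. points in one of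
   finitely many caps; these caps then norm x, contradicting preservation. *)
Lemma super_Delta_of_preserved (x : X) : unit_sphere x -> preserved_extreme_point x ->
  Delta_point re x -> super_Delta_point x.
Proof.
move=> xs [xB pe] [_ D]; split => // V [U [Uop ->]] [Ux _].
apply/diam2_fromP => [//|y []//|s sr s2]; apply: contrapT => nex.
have far y : B y -> U y -> `|x - y| <= s.
  move=> yB Uy; rewrite real_leNgt ?normr_real //; apply/negP => h.
  by apply: nex; exists y; split.
have [n [f [eps [fd eps0 sub]]]] := Uop x Ux.
apply: (caps_not_preserved fd eps0 _ pe) => h dh tau tau0.
have [r hr] : exists r, dual_norm h r.
  apply: sup_ex; [by exists `|h x|, x | by move=> _ [y _ <-] |].
  by have [M [_ hM]] := dual_ball_bound dh; exists M => _ [y yB <-]; apply: hM.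
have hxr : re (h x) <= r by apply: le_trans (re_le _) (dual_norm_ub hr xB).
pose S := [set y | B y /\ re (h x) - tau < re (h y)].
have Sx : S x by split => //; rewrite gtrBl.
have sS : slice re S.
  split; last by exists x.
  exists h, r, (r - re (h x) + tau); split => //.
    by apply: ltr_wpDl => //; rewrite subr_ge0.
  by congr (fun c => [set y | B y /\ c < re (h y)]); ring.
have SB : S `<=` B by move=> y [].
have [y [[yB hy] sy]] := (diam2_fromP xB SB).1 (D S sS Sx) s sr s2.
have /existsNP [i hi] : ~ (forall i, `|f i (y - x)| < eps).
  by move=> near_x; have := lt_le_trans sy (far y yB (sub y near_x)); rewrite ltxx.
have hi' : eps <= `|f i (y - x)| by rewrite real_leNgt ?normr_real ?gtr0_real //; apply/negP.
have [j hj] := rotation (f i (y - x)).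
exists (i, j), y; split => //; split => //; rewrite /cap_fun /=.
rewrite (_ : w j * f i y = w j * f i x + w j * f i (y - x)); last first.
  by rewrite (dualB _ _ (fd i)) mulrBr addrC subrK.
by rewrite re_add lerD2l ler_pdivrMr ?ltr0n // mulrC; apply: le_trans hi' hj.
Qed.

Theorem Delta_points_at_extreme_points (x : X) : unit_sphere x ->
  [/\ (preserved_extreme_point x /\ Delta_point re x -> super_Delta_point x),
      (extreme_point x /\ super_Delta_point x -> ccs_Delta_point re x) &
      (preserved_extreme_point x /\ Delta_point re x ->
         super_Delta_point x /\ ccs_Delta_point re x)].
Proof.
move=> xs; have part1 : preserved_extreme_point x /\ Delta_point re x ->
    super_Delta_point x by move=> [pe D]; apply: super_Delta_of_preserved.
split => // [[ex sd]|[pe D]].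
  by apply: ccs_Delta_of_super => //; apply: extreme_weakly_rigid.
have sd := part1 (conj pe D); split => //.
by apply: ccs_Delta_of_super => //; apply: preserved_weakly_rigid.
Qed.

End PreservedDelta.
End RealPart.

Section RealScalars.
Variable R : realType.

Definition R_rot (j : 'I_4) : R := if (j : nat) == 0%N then 1 else -1.

Lemma R_sqr_norm (a : R) : a * a = `|a| ^+ 2.
Proof. by rewrite real_normK ?num_real // expr2. Qed.

Lemma R_norm_expand (a b t : R) : t \is Num.real ->
  `|a - t * b| ^+ 2 = `|a| ^+ 2 - 2 * t * (a * b) + t ^+ 2 * `|b| ^+ 2.
Proof. by move=> _; rewrite !real_normK ?num_real //=; ring. Qed.

Lemma R_rotation (z : R) : exists j, `|z| <= 2 * (R_rot j * z).
Proof.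
case: (leP 0 z) => hz; first by exists ord0; rewrite /R_rot /= mul1r ger0_norm //; lra.
by exists (Ordinal (erefl : (1 < 4)%N)); rewrite /R_rot /= mulN1r ltr0_norm //; lra.
Qed.

Lemma R_sup (A : set R) : (exists a, A a) -> (forall a, A a -> 0 <= a) ->
  (exists M, forall a, A a -> a <= M) -> exists r, is_sup A r.
Proof.
move=> [a Aa] _ [M hM].
have hs : has_sup A by split; [exists a | exists M => b Ab; apply: hM].
exists (sup A); split; first by move=> b Ab; apply: sup_upper_bound.
by move=> s hs'; apply: ge_sup; [exists a | move=> b Ab; apply: hs'].
Qed.

Lemma R_archimedean (a : R) : a \is Num.real -> exists m : nat, a < m%:R.
Proof.
move=> _; exists (Num.Def.archi_bound `|a|).
exact: le_lt_trans (ler_norm a) (archi_boundP (normr_ge0 a)).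
Qed.

(* A bounded family of reals converges along an ultrafilter, to the supremum
   of the eventual lower bounds. *)
Lemma R_bounded_ulim (I : Type) (U : set_system I) : UltraFilter U ->
  forall (a : I -> R) (M : R), (forall i, `|a i| <= M) -> exists l : R, a @ U --> l.
Proof.
move=> UF a M aM; pose E := [set t : R | U [set i | t <= a i]].
have EM : E (- M).
  by apply: filterS filterT => i _ /=; have := aM i; rewrite ler_norml => /andP [].
have Eub t : E t -> t <= M.
  by move=> /filter_ex [i /= ti]; apply: le_trans ti (le_trans (ler_norm _) (aM i)).
have hs : has_sup E by split; [exists (- M) | exists M => t /Eub].
exists (sup E); apply/cvgrPdist_lt => e e0.
have [t Et lt_t] := sup_adherent e0 hs.
have lower : U [set i | sup E - e < a i] by apply: filterS Et => i /=; apply: lt_le_trans.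
have upper : U [set i | a i < sup E + e].
  case: (in_ultra_setVsetC [set i | sup E + e <= a i] UF) => [/(sup_upper_bound hs)|].
    by rewrite gerDl leNgt e0.
  by apply: filterS => i /= /negP; rewrite -ltNge.
by apply: filterS (filterI lower upper) => i [/= i1 i2]; rewrite ltr_distlC i1 i2.
Qed.

End RealScalars.

Section ComplexScalars.
Variable R : realType.
Local Notation C := R[i].
(* R[i] seen as an abstract numeric field, carrying its norm topology *)
Local Notation Cnum := (R[i] : numFieldType).

Definition C_rot (j : 'I_4) : C :=
  if (j : nat) == 0%N then 1 else if (j : nat) == 1%N then -1
  else if (j : nat) == 2%N then - 'i else 'i.

Lemma C_re_add (a b : C) : 'Re (a + b) = 'Re a + 'Re b.
Proof. by rewrite raddfD. Qed.

Lemma C_re_le (a : C) : 'Re a <= `|a|.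
Proof. exact: (leif_Re_Creal a).1. Qed.

Lemma C_re_realM (t a : C) : t \is Num.real -> 'Re (t * a) = t * 'Re a.
Proof. by move=> ht; rewrite ReMl. Qed.

Lemma C_re_conj (a : C) : 'Re (a^* * a) = `|a| ^+ 2.
Proof. by rewrite -normCKC; apply/Creal_ReP; apply: rpredX; apply: normr_real. Qed.

Lemma C_norm_expand (a b t : C) : t \is Num.real ->
  `|a - t * b| ^+ 2 = `|a| ^+ 2 - 2 * t * 'Re (a^* * b) + t ^+ 2 * `|b| ^+ 2.
Proof.
move=> /CrealP ht.
have c1 : (a - t * b)^* = a^* - t * b^*.
  by rewrite rmorphB rmorphM; congr (_ - _ * _); exact: ht.
have c2 : (a^* * b)^* = a * b^*.
  by rewrite rmorphM; congr (_ * _); exact: conjCK.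
by rewrite !normCKC ReE c1 c2; field.
Qed.

(* |z| <= |Re z| + |Im z| <= 2 max(|Re z|, |Im z|), and one of the four
   rotations turns the larger of the two into a nonnegative real part. *)
Lemma C_rotation (z : C) : exists j, `|z| <= 2 * 'Re (C_rot j * z).
Proof.
have ar : 'Re z \is Num.real := Creal_Re z.
have br : 'Im z \is Num.real := Creal_Im z.
have key c : `|'Re z| <= c -> `|'Im z| <= c -> `|z| <= 2 * c.
  move=> h1 h2; rewrite {1}[z]Crect; apply: le_trans (ler_normD _ _) _.
  by rewrite normrM normCi mul1r mulr2n mulrDl mul1r; apply: lerD.
case/orP: (real_leVge (normr_real ('Im z)) (normr_real ('Re z))) => hab.
  case/orP: (real_leVge (real0 _) ar) => ha.
    exists ord0; rewrite /C_rot /= mul1r; apply: key; first by rewrite ger0_norm.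
    by rewrite -(ger0_norm ha).
  exists (Ordinal (erefl : (1 < 4)%N)); rewrite /C_rot /= mulN1r raddfN /=.
  by apply: key; rewrite -(ler0_norm ha).
case/orP: (real_leVge (real0 _) br) => hb.
  have e2 : 'Re (- 'i * z) = 'Im z by rewrite mulNr raddfN /= ReMil opprK.
  exists (Ordinal (erefl : (2 < 4)%N)); rewrite /C_rot /= e2.
  by apply: key; [rewrite -(ger0_norm hb) | rewrite ger0_norm].
exists (Ordinal (erefl : (3 < 4)%N)); rewrite /C_rot /= ReMil.
by apply: key; rewrite -(ler0_norm hb).
Qed.

Lemma normcR (k : R) : `|k%:C%C| = `|k|%:C%C.
Proof. by rewrite normc_def /= expr0n addr0 sqrtr_sqr. Qed.

Lemma normci : `|'i%C : C| = 1.
Proof. by rewrite normc_def /= expr0n add0r expr1n sqrtr1. Qed.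

Lemma real_C (a : C) : a \is Num.real -> a = (complex.Re a)%:C%C.
Proof. by move=> ar; rewrite RRe_real. Qed.

Lemma C_sup (A : set C) : (exists a, A a) -> (forall a, A a -> 0 <= a) ->
  (exists M, forall a, A a -> a <= M) -> exists r, is_sup A r.
Proof.
move=> [a0 Aa0] A0 [M hM]; pose A' := [set t : R | A t%:C%C].
have Ar a : A a -> a = (complex.Re a)%:C%C by move=> Aa; apply/real_C/ger0_real/A0.
have MR : M \is Num.real by rewrite -(ler_real (hM _ Aa0)) ger0_real ?A0.
have hs : has_sup A'.
  split; first by exists (complex.Re a0); rewrite /A' /= -Ar.
  by exists (complex.Re M) => t At; rewrite -lecR -real_C //; apply: hM.
exists (sup A')%:C%C; split => [a Aa|u hu].
  by rewrite (Ar a Aa) lecR; apply: sup_upper_bound => //; rewrite /A' /= -Ar.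
have ur : u \is Num.real by rewrite -(ler_real (hu _ Aa0)) ger0_real ?A0.
rewrite (real_C ur) lecR; apply: ge_sup; first by case: hs.
by move=> t At; rewrite -lecR -real_C //; apply: hu.
Qed.

Lemma C_archimedean (a : C) : a \is Num.real -> exists m : nat, a < m%:R.
Proof.
move=> ar; have [m hm] := R_archimedean (num_real (complex.Re a)).
by exists m; rewrite (real_C ar) -(rmorph_nat (real_complex R)) ltcR.
Qed.

(* Ultralimits of bounded complex families, from those of their real and
   imaginary parts. *)
Lemma C_bounded_ulim (I : Type) (U : set_system I) : UltraFilter U ->
  forall (a : I -> Cnum) (M : Cnum), (forall i, `|a i| <= M) -> exists l : Cnum, a @ U --> l.
Proof.
move=> UF a M aM; have [i0 _] := filter_ex (@filterT _ U _).
have MR : M \is Num.real by rewrite -(ler_real (aM i0)) normr_real.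
have reM i : `|complex.Re (a i)| <= complex.Re M.
  by rewrite -lecR -real_C //; apply: le_trans (normc_ge_Re _) (aM i).
have imM i : `|complex.Im (a i)| <= complex.Re M.
  rewrite -lecR -real_C //; apply: le_trans _ (aM i).
  by have := normc_ge_Re (a i * 'i%C); rewrite ReiNIm normrN normrM normci mulr1.
have [l1 h1] := R_bounded_ulim UF reM.
have [l2 h2] := R_bounded_ulim UF imM.
exists (l1%:C%C + 'i%C * l2%:C%C); apply/cvgrPdist_lt => e e0.
have er : e \is Num.real by apply: gtr0_real.
have e2 : 0 < complex.Re e / 2 by apply: divr_gt0; rewrite // -ltcR -real_C.
apply: filterS (filterI ((cvgrPdist_lt _ _).1 h1 _ e2) ((cvgrPdist_lt _ _).1 h2 _ e2)).
move=> i [/= i1 i2].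
have -> : l1%:C%C + 'i%C * l2%:C%C - a i =
    (l1 - complex.Re (a i))%:C%C + 'i%C * (l2 - complex.Im (a i))%:C%C.
  by rewrite {1}(complexE (a i)) !rmorphB; ring.
apply: le_lt_trans (ler_normD _ _) _; rewrite normrM normci mul1r !normcR.
by rewrite -rmorphD (real_C er) ltcR; lra.
Qed.

End ComplexScalars.

Theorem mainTheorem3 (R : realType) :
  (forall (X : completeNormedModType R) (x : X), unit_sphere x ->
     [/\ (preserved_extreme_point x /\ Delta_point id x -> super_Delta_point x),
         (extreme_point x /\ super_Delta_point x -> ccs_Delta_point id x) &
         (preserved_extreme_point x /\ Delta_point id x ->
            super_Delta_point x /\ ccs_Delta_point id x)]) /\
  (forall (X : completeNormedModType R[i]) (x : X), unit_sphere x ->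
     [/\ (preserved_extreme_point x /\ Delta_point (fun z : R[i] => 'Re z) x ->
            super_Delta_point x),
         (extreme_point x /\ super_Delta_point x ->
            ccs_Delta_point (fun z : R[i] => 'Re z) x) &
         (preserved_extreme_point x /\ Delta_point (fun z : R[i] => 'Re z) x ->
            super_Delta_point x /\ ccs_Delta_point (fun z : R[i] => 'Re z) x)]).
Proof.
split=> X x.
- exact: (Delta_points_at_extreme_points (re := id) (cj := id) (fun a b => erefl)
    (@ler_norm R) (fun t a _ => erefl) (@R_sqr_norm R) (@R_norm_expand R)
    (@R_rotation R) (@R_sup R) (@R_archimedean R) (@R_bounded_ulim R)).
- exact: (Delta_points_at_extreme_points (cj := Num.conj_op) (@C_re_add R)
    (@C_re_le R) (@C_re_realM R) (@C_re_conj R) (@C_norm_expand R)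
    (@C_rotation R) (@C_sup R) (@C_archimedean R) (@C_bounded_ulim R)).
Qed.
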